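(* Let $\mathcal E$ be a nest on a complex Banach space $X$ and let $\Psi$ be an essential support function on $\mathcal E$. Then: (i) $\mathcal M^e(\Psi)$ is a $\mathcal T(\mathcal E)$-bimodule containing every $\mathcal T(\mathcal E)$-bimodule $\mathcal J$ with $\Phi^e_{\mathcal J}=\Psi$; (ii) $\mathcal M^0(\Psi)$ is a $\mathcal T(\mathcal E)$-bimodule contained in every norm-closed $\mathcal T(\mathcal E)$-bimodule $\mathcal J$ with $\Phi^e_{\mathcal J}=\Psi$.
   Context: A nest $\mathcal E$ on $X$ is a family of closed linear subspaces of $X$, totally ordered by inclusion, containing $\{0\}$ and $X$, closed under arbitrary meets $\wedge$ (intersections) and joins $\vee$ (norm-closed linear spans of unions). For $E\in\mathcal E$, $E_-=\vee\{F\in\mathcal E: F\subsetneq E\}$ and $E_+=\wedge\{F\in\mathcal E: E\subsetneq F\}$. $\mathcal T(\mathcal E)=\{T\in\mathcal B(X): TE\subseteq E\ \forall E\in\mathcal E\}$; a $\mathcal T(\mathcal E)$-bimodule is a linear subspace $\mathcal J\subseteq\mathcal B(X)$ with $\mathcal T(\mathcal E)\mathcal J,\mathcal J\mathcal T(\mathcal E)\subseteq\mathcal J$. For subspaces $M,L$ ($L$ closed), $M/L=\{m+L:m\in M\}$ and $\dim(M/L)$ is its dimension. $\mathcal E_f=\{N\in\mathcal E: 0<\dim(N/N_-)<\infty\}$. An essential support function is an inclusion-preserving map $\Psi:\mathcal E\to\mathcal E$ such that for all $N,N_1,N_2\in\mathcal E$ with $N_1\subseteq N_2$: (a) $\Psi(N)\in\mathcal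 E_f\Rightarrow\Psi(N)=\Psi(N)_+$; (b) $\dim(N_2/N_1)<\infty\Rightarrow\Psi(N_2)=\Psi(N_1)$. For a bimodule $\mathcal J$, $\Phi^e_{\mathcal J}(N)=\wedge\{L\in\mathcal E: \dim(TN/L)<\infty\ \forall T\in\mathcal J\}$. Define $\mathcal M^e(\Psi)=\{T\in\mathcal B(X): \dim(TN/L)<\infty$ for all $N,L\in\mathcal E$ with $L_+\supsetneq\Psi(N)\}$ and $\mathcal M^0(\Psi)$ = the norm closure of $\sum_{L,N\in\mathcal E,\ L_-\subsetneq\Psi(N)}\operatorname{span}\{f\otimes x: f\in(N_-)^\perp, x\in L\}$, where $S^\perp=\{f\in X^*: f(S)=\{0\}\}$ and $f\otimes x$ is $y\mapsto f(y)x$. *)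

From mathcomp Require Import all_boot all_order all_algebra.
From mathcomp Require Export complex.
From mathcomp Require Export all_classical all_reals all_analysis.
Export numFieldNormedType.Exports.

Set Implicit Arguments.
Unset Strict Implicit.
Unset Printing Implicit Defensive.

Import Order.TTheory GRing.Theory Num.Theory.
Local Open Scope classical_set_scope.
Local Open Scope ring_scope.

Section NestDefs.
Context {K : numFieldType} {X : normedModType K}.

Definition subspace (M : set X) : Prop :=
  M 0 /\ (forall x y, M x -> M y -> M (x + y)) /\ (forall (a : K) x, M x -> M (a *: x)).
Definition closed_subspace (M : set X) : Prop := subspace M /\ closed M.

Definition lspan (A : set X) : set X :=
  [set x | exists (n : nat) (c : 'I_n -> K) (v : 'I_n -> X),
      (forall i, A (v i)) /\ x = \sum_(i < n) c i *: v i].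

Definition nmeet (S : set (set X)) : set X := \bigcap_(E in S) E.
Definition njoin (S : set (set X)) : set X := closure (lspan (\bigcup_(E in S) E)).

Definition is_nest (E : set (set X)) : Prop :=
  (forall M, E M -> closed_subspace M) /\
  (forall M N, E M -> E N -> M `<=` N \/ N `<=` M) /\
  E [set 0] /\ E setT /\
  (forall S, S `<=` E -> E (nmeet S)) /\
  (forall S, S `<=` E -> E (njoin S)).

Definition nminus (E : set (set X)) (N : set X) : set X :=
  njoin [set F | E F /\ F `<=` N /\ F <> N].
Definition nplus (E : set (set X)) (N : set X) : set X :=
  nmeet [set F | E F /\ N `<=` F /\ N <> F].

(* dim (M/L) < oo, with M/L = {m + L : m in M}: finitely many elements of M
   span M modulo L *)
Definition findim_quot (M L : set X) : Prop :=
  exists (n : nat) (v : 'I_n -> X), (forall i, M (v i)) /\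
    forall m, M m -> exists w, lspan (range v) w /\ L (m - w).

(* E_f : 0 < dim(N/N_-) < oo *)
Definition nest_f (E : set (set X)) (N : set X) : Prop :=
  E N /\ ~ (N `<=` nminus E N) /\ findim_quot N (nminus E N).

Definition ess_support_function (E : set (set X)) (Psi : set X -> set X) : Prop :=
  [/\ (forall N, E N -> E (Psi N)),
      (forall N1 N2, E N1 -> E N2 -> N1 `<=` N2 -> Psi N1 `<=` Psi N2),
      (forall N, E N -> nest_f E (Psi N) -> Psi N = nplus E (Psi N)) &
      (forall N1 N2, E N1 -> E N2 -> N1 `<=` N2 -> findim_quot N2 N1 ->
         Psi N2 = Psi N1)].

Definition bounded_op (T : X -> X) : Prop :=
  (forall (a : K) x y, T (a *: x + y) = a *: T x + T y) /\ continuous T.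
Definition dual_vec (f : X -> K) : Prop :=
  (forall (a : K) x y, f (a *: x + y) = a * f x + f y) /\ continuous f.
Definition annihilator (S : set X) : set (X -> K) :=
  [set f | dual_vec f /\ forall x, S x -> f x = 0].
Definition rank1 (f : X -> K) (x : X) : X -> X := fun y => f y *: x.

Definition nest_alg (E : set (set X)) : set (X -> X) :=
  [set T | bounded_op T /\ forall N, E N -> T @` N `<=` N].

Definition bimodule (E : set (set X)) (J : set (X -> X)) : Prop :=
  [/\ J `<=` bounded_op, J (fun _ => 0),
      (forall S T, J S -> J T -> J (fun y => S y + T y)),
      (forall (a : K) T, J T -> J (fun y => a *: T y)) &
      (forall A T, nest_alg E A -> J T -> J (A \o T) /\ J (T \o A))].

Definition op_span (G : set (X -> X)) : set (X -> X) :=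
  [set T | exists (n : nat) (c : 'I_n -> K) (S : 'I_n -> X -> X),
      (forall i, G (S i)) /\ forall y, T y = \sum_(i < n) c i *: S i y].
Definition op_closure (S : set (X -> X)) : set (X -> X) :=
  [set T | bounded_op T /\ forall e : K, 0 < e ->
     exists S', S S' /\ forall x, `|T x - S' x| <= e * `|x|].
Definition norm_closed (J : set (X -> X)) : Prop := op_closure J `<=` J.

Definition Phi_e (E : set (set X)) (J : set (X -> X)) (N : set X) : set X :=
  nmeet [set L | E L /\ forall T, J T -> findim_quot (T @` N) L].

Definition Me (E : set (set X)) (Psi : set X -> set X) : set (X -> X) :=
  [set T | bounded_op T /\ forall N L, E N -> E L ->
     Psi N `<=` nplus E L -> Psi N <> nplus E L -> findim_quot (T @` N) L].

Definition M0 (E : set (set X)) (Psi : set X -> set X) : set (X -> X) :=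
  op_closure (op_span
    [set T | exists L N f x, E L /\ E N /\
        (nminus E L `<=` Psi N /\ nminus E L <> Psi N) /\
        annihilator (nminus E N) f /\ L x /\ T = rank1 f x]).

End NestDefs.

From Pilot Require Import Defs.
From mathcomp Require Import all_boot all_order all_algebra.
From mathcomp Require Import complex.
From mathcomp Require Import all_classical all_reals all_analysis.
From mathcomp Require Import ring lra.
Import numFieldNormedType.Exports.
Import Order.TTheory GRing.Theory Num.Theory.
Local Open Scope classical_set_scope.
Local Open Scope ring_scope.
Set Implicit Arguments.
Unset Strict Implicit.
Unset Printing Implicit Defensive.

(* - Me(Psi) is a bimodule because the condition "dim(T N / L) < oo" is
     preserved by the bimodule operations on T: dim(M/L) < oo holds iff M lies
     in span(s) + L for a finite list s (the spanning vectors may then be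
     chosen inside M), and this is visibly stable under sums, scalings and
     compositions.
     Maximality: if J has Psi(N) = Phi^e_J(N) strictly below L_+, some L' of
     the family whose meet is Phi^e_J(N) lies below L, so dim(T N / L) < oo.
   - M0(Psi) is the norm closure of the span of rank-one operators f (x) x;
     span and closure are stable under the bimodule operations. Minimality:
     every generator f (x) x factors as (g (x) x) T' (f (x) u) with T' in J,
     where g is a Hahn-Banach functional separating T' u from L_-.
   - Hahn-Banach separation for complex normed spaces is not in the library;
     it is proved via Zorn's lemma on dominated graphs of real-linear
     functionals, followed by complexification. *)

(* [Defs.subspace] is shadowed by the subspace topology of mathcomp-analysis. *)
Local Notation linsub := Defs.subspace.

Section FiniteCodimension.
Context {K : numFieldType} {X : normedModType K}.
Implicit Types (M L : set X) (s : seq X).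

Lemma linsub0 M : linsub M -> M 0.
Proof. by case. Qed.

Lemma linsubD M x y : linsub M -> M x -> M y -> M (x + y).
Proof. by case=> _ [addM _]; apply: addM. Qed.

Lemma linsubZ M (a : K) x : linsub M -> M x -> M (a *: x).
Proof. by case=> _ [_ scaleM]; apply: scaleM. Qed.

Lemma linsubB M x y : linsub M -> M x -> M y -> M (x - y).
Proof. by move=> sM Mx My; apply: linsubD => //; rewrite -scaleN1r; apply: linsubZ. Qed.

Lemma linsubI M M' : linsub M -> linsub M' -> linsub (M `&` M').
Proof.
move=> sM sM'; split; [|split].
- by split; apply: linsub0.
- by move=> x y [Mx M'x] [My M'y]; split; apply: linsubD.
- by move=> a x [Mx M'x]; split; apply: linsubZ.
Qed.

Definition comb (ps : seq (K * X)) : X := \sum_(p <- ps) p.1 *: p.2.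
Definition over s (ps : seq (K * X)) : Prop := {subset [seq p.2 | p <- ps] <= s}.
Definition scale_comb (a : K) (ps : seq (K * X)) := [seq (a * p.1, p.2) | p <- ps].

Lemma comb_cat ps qs : comb (ps ++ qs) = comb ps + comb qs.
Proof. by rewrite /comb big_cat. Qed.

Lemma comb_scale a ps : comb (scale_comb a ps) = a *: comb ps.
Proof. by rewrite /comb big_map scaler_sumr; apply: eq_bigr => p _; rewrite scalerA. Qed.

Lemma over_cat s ps qs : over s ps -> over s qs -> over s (ps ++ qs).
Proof. by move=> sp sq x; rewrite map_cat mem_cat => /orP[/sp|/sq]. Qed.

Lemma over_scale s a ps : over s ps -> over s (scale_comb a ps).
Proof. by move=> sp x; rewrite -map_comp; apply: sp. Qed.

Lemma over_sub s s' ps : {subset s <= s'} -> over s ps -> over s' ps.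
Proof. by move=> ss' sp x /sp/ss'. Qed.

Definition span_plus s L : set X :=
  [set m | exists2 ps, over s ps & L (m - comb ps)].

Lemma span_plus_base s L x : linsub L -> L x -> span_plus s L x.
Proof. by move=> sL Lx; exists [::] => //; rewrite /comb big_nil subr0. Qed.

Lemma linsub_span_plus s L : linsub L -> linsub (span_plus s L).
Proof.
move=> sL; split; [|split].
- by apply: span_plus_base => //; apply: linsub0.
- move=> x y [px spx Lx] [py spy Ly]; exists (px ++ py); first exact: over_cat.
  by rewrite comb_cat opprD addrACA; apply: linsubD.
- move=> a x [px spx Lx]; exists (scale_comb a px); first exact: over_scale.
  by rewrite comb_scale -scalerBr; apply: linsubZ.
Qed.

Lemma span_plus_sub s s' L : {subset s <= s'} -> span_plus s L `<=` span_plus s' L.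
Proof. by move=> ss' m [ps sp Lm]; exists ps => //; apply: over_sub sp. Qed.

Lemma span_plus_cons z s L m : span_plus (z :: s) L m ->
  exists d : K, span_plus s L (m - d *: z).
Proof.
move=> [ps]; elim: ps m => [|q ps IH] m sp Lm.
  by exists 0; rewrite scale0r subr0; exists [::].
have qz : q.2 \in z :: s by apply: sp => /=; rewrite inE eqxx.
have sp' : over (z :: s) ps by move=> x xps; apply: sp => /=; rewrite inE xps orbT.
have Lm' : L (m - q.1 *: q.2 - comb ps) by move: Lm; rewrite /comb big_cons opprD addrA.
have [d [qs sqs Lqs]] := IH _ sp' Lm'.
move: qz; rewrite inE => /orP[/eqP qz|qs_in].
  exists (q.1 + d); exists qs => //.
  by move: Lqs; rewrite qz scalerDl opprD addrA.
exists d; exists (q :: qs).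
  by move=> x /=; rewrite inE => /orP[/eqP->|/sqs].
suff -> : m - d *: z - comb (q :: qs) = m - q.1 *: q.2 - d *: z - comb qs by [].
by rewrite /comb big_cons opprD addrA (addrAC m).
Qed.

(* Vectors spanning [M] modulo [L] can be chosen inside [M]: by induction on
   [s], a vector of [M] with nonzero coefficient on the first generator [z]
   replaces [z], and the rest of [M] lies in span([s]) + [L] up to it. *)
Lemma span_plus_inside L s M : linsub L -> linsub M -> M `<=` span_plus s L ->
  exists2 sq, (forall x, x \in sq -> M x) & M `<=` span_plus sq L.
Proof.
move=> sL; elim: s M => [|z s IH] M sM Ms; first by exists [::].
have sSL := linsub_span_plus s sL.
pose M' := M `&` span_plus s L.
have [sq sqM' M'sq] := IH M' (linsubI sM sSL) (fun m => @proj2 _ _).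
have sqM x : x \in sq -> M x by move=> /sqM' [].
have [MM'|] := pselect (M `<=` M'); first by exists sq => // m /MM' /M'sq.
move=> /existsNP [m0 /not_implyP [Mm0 nM'm0]].
have [c0 Hc0] := span_plus_cons (Ms m0 Mm0).
have c0N : c0 != 0.
  apply: contra_notN nM'm0 => /eqP c00; split => //.
  by move: Hc0; rewrite c00 scale0r subr0.
exists (m0 :: sq); first by move=> x; rewrite inE => /orP[/eqP->|/sqM].
move=> m Mm; have [d Hd] := span_plus_cons (Ms m Mm).
have M'm : M' (m - (d / c0) *: m0).
  split; first by apply: linsubB => //; apply: linsubZ.
  have -> : m - (d / c0) *: m0 = (m - d *: z) - (d / c0) *: (m0 - c0 *: z).
    by rewrite scalerBr scalerA divfK // opprB addrA subrK.
  by apply: linsubB => //; apply: linsubZ.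
have [ps sp Lps] := M'sq _ M'm.
exists ((d / c0, m0) :: ps).
  by move=> x; rewrite inE => /orP[/eqP->|/sp xsq]; rewrite inE ?eqxx ?xsq ?orbT.
by move: Lps; rewrite /comb big_cons -/(comb ps) /= opprD addrA.
Qed.

Lemma findim_quot_span_plus M L : findim_quot M L -> exists s, M `<=` span_plus s L.
Proof.
move=> [n [v [Mv Hv]]]; exists [seq v i | i <- enum 'I_n].
move=> m /Hv [_ [[k [c [w [vw ->]]]] Lm]]; exists [seq (c i, w i) | i <- enum 'I_k].
  move=> x /mapP [p /mapP [i _ ->] ->] /=; have [j _ <-] := vw i.
  by apply: map_f; rewrite mem_enum.
by rewrite /comb big_map big_enum.
Qed.

Lemma span_plus_findim_quot M L s : linsub M -> linsub L ->
  M `<=` span_plus s L -> findim_quot M L.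
Proof.
move=> sM sL /(span_plus_inside sL sM) [sq sqM Msq].
exists (size sq), (fun i => nth 0 sq i); split; first by move=> i; apply/sqM/mem_nth.
move=> m /Msq [ps sp Lm]; exists (comb ps); split => //.
pose d : K * X := (0, 0).
exists (size ps), (fun i => (nth d ps i).1), (fun i => (nth d ps i).2); split.
  move=> i; have xsq : (nth d ps i).2 \in sq.
    by apply: sp; apply: (map_f (fun p : K * X => p.2)); apply: mem_nth.
  have hi : (index (nth d ps i).2 sq < size sq)%N by rewrite index_mem.
  by exists (Ordinal hi) => //; apply: nth_index.
by rewrite /comb (big_nth d) big_mkord.
Qed.

Definition lin_op (T : X -> X) : Prop :=
  forall (a : K) x y, T (a *: x + y) = a *: T x + T y.

Lemma lin_op0 T : lin_op T -> T 0 = 0.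
Proof.
move=> lT; have := lT 1 0 0; rewrite !scale1r addr0 => h.
by apply: (addrI (T 0)); rewrite addr0 -h.
Qed.

Lemma lin_opD T x y : lin_op T -> T (x + y) = T x + T y.
Proof. by move=> lT; have := lT 1 x y; rewrite !scale1r. Qed.

Lemma lin_opZ T a x : lin_op T -> T (a *: x) = a *: T x.
Proof. by move=> lT; rewrite -[a *: x]addr0 lT lin_op0 // addr0. Qed.

Lemma lin_opB T x y : lin_op T -> T (x - y) = T x - T y.
Proof. by move=> lT; rewrite lin_opD // -scaleN1r lin_opZ // scaleN1r. Qed.

Lemma lin_op_sum T (I : Type) (r : seq I) (F : I -> X) : lin_op T ->
  T (\sum_(i <- r) F i) = \sum_(i <- r) T (F i).
Proof.
move=> lT; elim: r => [|i r IH]; first by rewrite !big_nil lin_op0.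
by rewrite !big_cons lin_opD // IH.
Qed.

Lemma lin_op_zero : lin_op (fun _ => 0).
Proof. by move=> a x y; rewrite scaler0 addr0. Qed.

Lemma lin_op_add S T : lin_op S -> lin_op T -> lin_op (fun y => S y + T y).
Proof. by move=> lS lT a x y; rewrite lS lT scalerDr addrACA. Qed.

Lemma lin_op_scale (a : K) T : lin_op T -> lin_op (fun y => a *: T y).
Proof. by move=> lT b x y; rewrite lT scalerDr !scalerA mulrC. Qed.

Lemma lin_op_comp A T : lin_op A -> lin_op T -> lin_op (A \o T).
Proof. by move=> lA lT b x y /=; rewrite lT lA. Qed.

Lemma linsub_image T N : lin_op T -> linsub N -> linsub (T @` N).
Proof.
move=> lT sN; split; [|split].
- by exists 0; [apply: linsub0|apply: lin_op0].
- by move=> _ _ [x Nx <-] [y Ny <-]; exists (x + y); [apply: linsubD|apply: lin_opD].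
- by move=> a _ [x Nx <-]; exists (a *: x); [apply: linsubZ|apply: lin_opZ].
Qed.

Lemma span_plus_image T s L : lin_op T -> (forall x, L x -> L (T x)) ->
  T @` span_plus s L `<=` span_plus [seq T x | x <- s] L.
Proof.
move=> lT TL _ [m [ps sp Lm] <-]; exists [seq (p.1, T p.2) | p <- ps].
  by move=> _ /mapP [_ /mapP [p pps ->] ->]; apply/map_f/sp/map_f.
have -> : comb [seq (p.1, T p.2) | p <- ps] = T (comb ps).
  by rewrite /comb big_map lin_op_sum //; apply: eq_bigr => p _; rewrite lin_opZ.
by rewrite -lin_opB //; apply: TL.
Qed.

Lemma findim_quot_of_sub M L : M `<=` L -> findim_quot M L.
Proof.
move=> ML; exists 0%N, (fun _ => 0); split; first by case=> i; rewrite ltn0.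
move=> m Mm; exists 0; split; last by rewrite subr0; apply: ML.
by exists 0%N, (fun _ => 0), (fun _ => 0); split; [case=> i; rewrite ltn0|rewrite big_ord0].
Qed.

Lemma findim_quot_mono M L L' : L `<=` L' -> findim_quot M L -> findim_quot M L'.
Proof.
move=> LL' [n [v [Mv Hv]]]; exists n, v; split => // m /Hv [w [w1 w2]].
by exists w; split => //; apply: LL'.
Qed.

Section ImageCodimension.
Variables (N L : set X).
Hypotheses (sN : linsub N) (sL : linsub L).

Lemma findim_image_zero : findim_quot ((fun _ => 0) @` N) L.
Proof.
apply: (span_plus_findim_quot (s := [::]) (linsub_image lin_op_zero sN) sL).
by move=> _ [n _ <-]; apply: span_plus_base => //; apply: linsub0.
Qed.

Lemma findim_image_add S T : lin_op S -> lin_op T ->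
  findim_quot (S @` N) L -> findim_quot (T @` N) L ->
  findim_quot ((fun y => S y + T y) @` N) L.
Proof.
move=> lS lT /findim_quot_span_plus [s1 HS] /findim_quot_span_plus [s2 HT].
apply: (span_plus_findim_quot (s := s1 ++ s2) (linsub_image (lin_op_add lS lT) sN) sL).
have sub1 : span_plus s1 L `<=` span_plus (s1 ++ s2) L.
  by apply: span_plus_sub => x; rewrite mem_cat => ->.
have sub2 : span_plus s2 L `<=` span_plus (s1 ++ s2) L.
  by apply: span_plus_sub => x; rewrite mem_cat orbC => ->.
move=> _ [n Nn <-]; apply: linsubD; first exact: linsub_span_plus.
  by apply/sub1/HS; exists n.
by apply/sub2/HT; exists n.
Qed.

Lemma findim_image_scale (a : K) T : lin_op T ->
  findim_quot (T @` N) L -> findim_quot ((fun y => a *: T y) @` N) L.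
Proof.
move=> lT /findim_quot_span_plus [s HT].
apply: (span_plus_findim_quot (s := s) (linsub_image (lin_op_scale a lT) sN) sL).
by move=> _ [n Nn <-]; apply: linsubZ; [apply: linsub_span_plus|apply: HT; exists n].
Qed.

Lemma findim_image_compL A T : lin_op A -> lin_op T -> (forall x, L x -> L (A x)) ->
  findim_quot (T @` N) L -> findim_quot ((A \o T) @` N) L.
Proof.
move=> lA lT AL /findim_quot_span_plus [s HT].
apply: (span_plus_findim_quot (s := [seq A x | x <- s])
  (linsub_image (lin_op_comp lA lT) sN) sL).
by move=> _ [n Nn <-]; apply: span_plus_image => //; exists (T n) => //; apply: HT; exists n.
Qed.

Lemma findim_image_compR A T : lin_op A -> lin_op T -> (forall x, N x -> N (A x)) ->
  findim_quot (T @` N) L -> findim_quot ((T \o A) @` N) L.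
Proof.
move=> lA lT AN /findim_quot_span_plus [s HT].
apply: (span_plus_findim_quot (s := s) (linsub_image (lin_op_comp lT lA) sN) sL).
by move=> _ [n Nn <-]; apply: HT; exists (A n) => //; apply: AN.
Qed.

End ImageCodimension.
End FiniteCodimension.

Section BoundedOperators.
Context {K : numFieldType} {X : normedModType K}.

Lemma bounded_op_zero : bounded_op (fun _ : X => 0 : X).
Proof. by split; [exact: lin_op_zero|move=> x; apply: cvg_cst]. Qed.

Lemma bounded_op_add (S T : X -> X) :
  bounded_op S -> bounded_op T -> bounded_op (fun y => S y + T y).
Proof.
move=> [lS cS] [lT cT]; split; first exact: lin_op_add.
by move=> x; apply: cvgD; [apply: cS|apply: cT].
Qed.

Lemma bounded_op_scale (a : K) (T : X -> X) :
  bounded_op T -> bounded_op (fun y => a *: T y).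
Proof.
move=> [lT cT]; split; first exact: lin_op_scale.
by move=> x; apply: continuousZ; [apply: cvg_cst|apply: cT].
Qed.

Lemma bounded_op_comp (A T : X -> X) :
  bounded_op A -> bounded_op T -> bounded_op (A \o T).
Proof.
move=> [lA cA] [lT cT]; split; first exact: lin_op_comp.
by move=> x; apply: continuous_comp; [apply: cT|apply: cA].
Qed.

Lemma bounded_op_lin (T : X -> X) : bounded_op T -> lin_op T.
Proof. by case. Qed.

(* Continuity at 0 gives the operator-norm bound |A y| <= C |y|. *)
Lemma bounded_op_norm (A : X -> X) : bounded_op A ->
  exists2 C : K, 0 < C & forall y, `|A y| <= C * `|y|.
Proof.
move=> [lA cA].
have := cA 0; rewrite /continuous_at (lin_op0 lA) => /cvgr0Pnorm_lt /(_ 1 ltr01).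
move=> /nbhs_norm0P [d /= d0 Hd].
exists (2 / d); first by rewrite divr_gt0.
move=> y; have [->|y0] := eqVneq y 0; first by rewrite (lin_op0 lA) !normr0 mulr0.
have ny0 : 0 < `|y| by rewrite normr_gt0.
pose t := d / (2 * `|y|).
have t0 : 0 < t by rewrite divr_gt0 // mulr_gt0.
have : `|A (t *: y)| < 1.
  apply: Hd => /=; rewrite normrZ gtr0_norm // /t -mulrA mulrC -mulrA.
  rewrite invfM -mulrA mulKf ?gt_eqF //.
  by rewrite gtr_pMl // invf_lt1 // ltr1n.
rewrite (lin_opZ _ _ lA) normrZ gtr0_norm // => h.
rewrite -(ler_pM2l t0) mulrA.
have -> : t * (2 / d) = `|y|^-1 by rewrite /t; field; rewrite !gt_eqF.
by rewrite mulVf ?gt_eqF // ltW.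
Qed.

End BoundedOperators.


Section OperatorSpan.
Context {K : numFieldType} {X : normedModType K}.
Implicit Types (G P J : set (X -> X)) (A S T : X -> X).

Definition ord_cat {V : Type} {m n} (f : 'I_m -> V) (g : 'I_n -> V)
  (i : 'I_(m + n)) : V :=
  match fintype.split i with inl j => f j | inr k => g k end.

Lemma ord_cat_l {V : Type} m n (f : 'I_m -> V) (g : 'I_n -> V) i :
  ord_cat f g (lshift n i) = f i.
Proof. by rewrite /ord_cat -[lshift n i]/(unsplit (inl i : 'I_m + 'I_n)) unsplitK. Qed.

Lemma ord_cat_r {V : Type} m n (f : 'I_m -> V) (g : 'I_n -> V) i :
  ord_cat f g (rshift m i) = g i.
Proof. by rewrite /ord_cat -[rshift m i]/(unsplit (inr i : 'I_m + 'I_n)) unsplitK. Qed.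

Lemma op_span_zero G : op_span G (fun _ => 0).
Proof.
exists 0%N, (fun _ => 0), (fun _ _ => 0); split; first by case=> m; rewrite ltn0.
by move=> y; rewrite big_ord0.
Qed.

Lemma op_span_add G S T : op_span G S -> op_span G T -> op_span G (fun y => S y + T y).
Proof.
move=> [m [c [S' [GS HS]]]] [n [d [T' [GT HT]]]].
exists (m + n)%N, (ord_cat c d), (ord_cat S' T'); split.
  by move=> i; rewrite /ord_cat; case: (fintype.split i) => j; [apply: GS|apply: GT].
move=> y; rewrite HS HT big_split_ord; congr (_ + _); apply: eq_bigr => i _.
  by rewrite !ord_cat_l.
by rewrite !ord_cat_r.
Qed.

Lemma op_span_scale G (a : K) T : op_span G T -> op_span G (fun y => a *: T y).
Proof.
move=> [n [c [S [GS HT]]]]; exists n, (fun i => a * c i), S; split => // y.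
by rewrite HT scaler_sumr; apply: eq_bigr => i _; rewrite scalerA.
Qed.

Lemma op_span_compL G A T : lin_op A -> (forall S, G S -> G (A \o S)) ->
  op_span G T -> op_span G (A \o T).
Proof.
move=> lA GA [n [c [S [GS HT]]]]; exists n, c, (fun i => A \o S i).
split => [i|y /=]; first by apply: GA; apply: GS.
by rewrite HT lin_op_sum //; apply: eq_bigr => i _; rewrite lin_opZ.
Qed.

Lemma op_span_compR G A T : (forall S, G S -> G (S \o A)) ->
  op_span G T -> op_span G (T \o A).
Proof.
move=> GA [n [c [S [GS HT]]]]; exists n, c, (fun i => S i \o A).
by split => [i|y /=]; [apply: GA; apply: GS|apply: HT].
Qed.

Lemma op_span_sub_bimodule (E : set (set X)) G J :
  bimodule E J -> G `<=` J -> op_span G `<=` J.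
Proof.
move=> [_ J0 JD JZ _] GJ T [n [c [S [GS HT]]]].
have -> : T = fun y => \sum_(i < n) c i *: S i y by apply: funext.
elim: n c S GS {HT} => [|n IH] c S GS.
  suff -> : (fun y => \sum_(i < 0) c i *: S i y) = fun _ => 0 by [].
  by apply: funext => y; rewrite big_ord0.
have -> : (fun y => \sum_(i < n.+1) c i *: S i y) =
    fun y => c ord0 *: S ord0 y + \sum_(i < n) c (lift ord0 i) *: S (lift ord0 i) y.
  by apply: funext => y; rewrite big_ord_recl.
apply: JD; first by apply: JZ; apply: GJ; apply: GS.
exact: IH (fun i => c (lift ord0 i)) (fun i => S (lift ord0 i)) (fun i => GS _).
Qed.

Lemma op_closure_mono P P' : P `<=` P' -> op_closure P `<=` op_closure P'.
Proof.
move=> PP' T [bT HT]; split => // e e0; have [S [PS HS]] := HT e e0.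
by exists S; split => //; apply: PP'.
Qed.

Lemma op_closure_zero P : P (fun _ => 0) -> op_closure P (fun _ => 0).
Proof.
move=> P0; split; first exact: bounded_op_zero.
move=> e e0; exists (fun _ => 0); split => // x.
by rewrite subr0 normr0 mulr_ge0 // ltW.
Qed.

Lemma op_closure_add P S T : (forall S T, P S -> P T -> P (fun y => S y + T y)) ->
  op_closure P S -> op_closure P T -> op_closure P (fun y => S y + T y).
Proof.
move=> PD [bS HS] [bT HT]; split; first exact: bounded_op_add.
move=> e e0; have e20 : 0 < e / 2 by rewrite divr_gt0.
have [S' [PS' HS']] := HS _ e20; have [T' [PT' HT']] := HT _ e20.
exists (fun y => S' y + T' y); split; first exact: PD.
move=> x; rewrite opprD addrACA; apply: le_trans (ler_normD _ _) _.
by apply: le_trans (lerD (HS' x) (HT' x)) _; rewrite -mulrDl -splitr.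
Qed.

Lemma op_closure_scale P (a : K) T : (forall T, P T -> P (fun y => a *: T y)) ->
  op_closure P T -> op_closure P (fun y => a *: T y).
Proof.
move=> PZ [bT HT]; split; first exact: bounded_op_scale.
move=> e e0; have a10 : 0 < `|a| + 1 by rewrite ltr_wpDl.
have ea0 : 0 < e / (`|a| + 1) by rewrite divr_gt0.
have [T' [PT' HT']] := HT _ ea0.
exists (fun y => a *: T' y); split; first exact: PZ.
move=> x; rewrite -scalerBr normrZ.
apply: le_trans (ler_wpM2l (normr_ge0 _) (HT' x)) _.
rewrite mulrA ler_wpM2r // mulrA ler_pdivrMr //.
by rewrite mulrDr mulr1 mulrC lerDl ltW.
Qed.

Lemma op_closure_compL P A T : bounded_op A -> (forall T, P T -> P (A \o T)) ->
  op_closure P T -> op_closure P (A \o T).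
Proof.
move=> bA PA [bT HT]; split; first exact: bounded_op_comp.
have [C C0 HC] := bounded_op_norm bA.
move=> e e0; have eC : 0 < e / C by rewrite divr_gt0.
have [T' [PT' HT']] := HT _ eC.
exists (A \o T'); split; first exact: PA.
move=> x /=; rewrite -lin_opB; last exact: bounded_op_lin.
apply: le_trans (HC _) _; apply: le_trans (ler_wpM2l (ltW C0) (HT' x)) _.
by rewrite mulrA mulrCA mulfV ?gt_eqF // mulr1.
Qed.

Lemma op_closure_compR P A T : bounded_op A -> (forall T, P T -> P (T \o A)) ->
  op_closure P T -> op_closure P (T \o A).
Proof.
move=> bA PA [bT HT]; split; first exact: bounded_op_comp.
have [C C0 HC] := bounded_op_norm bA.
move=> e e0; have eC : 0 < e / C by rewrite divr_gt0.
have [T' [PT' HT']] := HT _ eC.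
exists (T' \o A); split; first exact: PA.
move=> x /=; apply: le_trans (HT' (A x)) _.
apply: le_trans (ler_wpM2l (ltW eC) (HC x)) _.
by rewrite mulrA mulfVK ?gt_eqF.
Qed.

End OperatorSpan.

Section Functionals.
Context {K : numFieldType} {X : normedModType K}.

Lemma dual_vec0 (g : X -> K) : dual_vec g -> g 0 = 0.
Proof.
move=> [lg _]; have := lg 1 0 0; rewrite scale1r mul1r addr0 => h.
by apply: (addrI (g 0)); rewrite addr0 -h.
Qed.

Lemma dual_vecZ (g : X -> K) a x : dual_vec g -> g (a *: x) = a * g x.
Proof. by move=> dg; rewrite -[a *: x]addr0 dg.1 dual_vec0 // addr0. Qed.

End Functionals.

Definition separates_subspaces {K : numFieldType} (X : normedModType K) : Prop :=
  forall (L : set X) y, linsub L -> closed L -> ~ L y ->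
    exists g : X -> K, dual_vec g /\ (forall x, L x -> g x = 0) /\ g y = 1.
Section Nest.
Context {K : numFieldType} {X : normedModType K}.
Variable E : set (set X).
Hypothesis nestE : is_nest E.

Lemma nest_linsub M : E M -> linsub M.
Proof. by case: nestE => h _ /h []. Qed.

Lemma nest_closed M : E M -> closed M.
Proof. by case: nestE => h _ /h []. Qed.

Lemma nest_total M N : E M -> E N -> M `<=` N \/ N `<=` M.
Proof. by case: nestE => _ [h _]; apply: h. Qed.

Lemma nminus_in N : E (nminus E N).
Proof. by case: nestE => _ [_ [_ [_ [_ joinE]]]]; apply: joinE => F []. Qed.

Lemma nmeet_lb (S : set (set X)) F : S F -> nmeet S `<=` F.
Proof. by move=> SF x; apply. Qed.

Lemma nmeet_le (S S' : set (set X)) : S `<=` S' -> nmeet S' `<=` nmeet S.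
Proof. by move=> SS' x H F /SS'; apply: H. Qed.

Lemma lt_nminus M N : E M -> M `<=` N -> M <> N -> M `<=` nminus E N.
Proof.
move=> EM MN MN' x Mx; apply: subset_closure.
exists 1%N, (fun _ => 1), (fun _ => x); split; first by move=> _; exists M.
by rewrite big_ord1 scale1r.
Qed.

Lemma nest_alg_bounded A : nest_alg E A -> bounded_op A.
Proof. by case. Qed.

Lemma nest_alg_invariant A M : nest_alg E A -> E M -> forall x, M x -> M (A x).
Proof. by move=> [_ AE] EM x Mx; apply: (AE M EM); exists x. Qed.

Lemma Me_bimodule Psi : bimodule E (Me E Psi).
Proof.
split.
- by move=> T [].
- split; first exact: bounded_op_zero.
  by move=> N L EN EL _ _; apply: findim_image_zero; apply: nest_linsub.
- move=> S T [bS HS] [bT HT]; split; first exact: bounded_op_add.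
  move=> N L EN EL NL NL'; have HSN := HS _ _ EN EL NL NL'; have HTN := HT _ _ EN EL NL NL'.
  by apply: findim_image_add => //; solve [exact: nest_linsub | exact: bounded_op_lin].
- move=> a T [bT HT]; split; first exact: bounded_op_scale.
  move=> N L EN EL NL NL'; have HTN := HT _ _ EN EL NL NL'.
  by apply: findim_image_scale => //; solve [exact: nest_linsub | exact: bounded_op_lin].
- move=> A T nA [bT HT]; have bA := nest_alg_bounded nA; split; split.
  + exact: bounded_op_comp.
  + move=> N L EN EL NL NL'; have HTN := HT _ _ EN EL NL NL'.
    apply: findim_image_compL => //;
      solve [exact: nest_linsub | exact: bounded_op_lin | exact: nest_alg_invariant].
  + exact: bounded_op_comp.
  + move=> N L EN EL NL NL'; have HTN := HT _ _ EN EL NL NL'.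
    apply: findim_image_compR => //;
      solve [exact: nest_linsub | exact: bounded_op_lin | exact: nest_alg_invariant].
Qed.

(* ... containing every bimodule [J] with essential support function [Psi]:
   if [Psi N] is strictly below [L_+], some [L'] in the family whose meet is
   [Phi_e J N = Psi N] lies below [L]. *)
Lemma bimodule_sub_Me Psi J : bimodule E J ->
  (forall N, E N -> Phi_e E J N = Psi N) -> J `<=` Me E Psi.
Proof.
move=> [Jb _ _ _ _] PhiE T JT; split; first exact: Jb.
move=> N L EN EL PsiL PsiL'.
pose S := [set L' | E L' /\ forall T, J T -> findim_quot (T @` N) L'].
have PsiE : Psi N = nmeet S by rewrite -PhiE.
have [[L' [SL' L'L]]|noL'] := pselect (exists L', S L' /\ L' `<=` L).
  by apply: findim_quot_mono L'L _; apply: SL'.2.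
exfalso; apply: PsiL'; apply/seteqP; split => //.
rewrite PsiE; apply: nmeet_le => L' SL'; split; first exact: SL'.1.
have [L'L|LL'] := nest_total SL'.1 EL; first by exfalso; apply: noL'; exists L'.
by split => // eqLL'; apply: noL'; exists L'; split => //; rewrite -eqLL'.
Qed.

Definition M0_gen Psi : set (X -> X) :=
  [set T | exists L N f x, E L /\ E N /\
        (nminus E L `<=` Psi N /\ nminus E L <> Psi N) /\
        annihilator (nminus E N) f /\ L x /\ T = rank1 f x].

Lemma M0E Psi : M0 E Psi = op_closure (op_span (M0_gen Psi)).
Proof. by []. Qed.

Lemma M0_gen_compL Psi A S : nest_alg E A -> M0_gen Psi S -> M0_gen Psi (A \o S).
Proof.
move=> nA [L [N [f [x [EL [EN [LN [fN [Lx ->]]]]]]]]].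
exists L, N, f, (A x); do 4 (split => //); split; first exact: nest_alg_invariant nA EL _ Lx.
apply: funext => y /=; rewrite /rank1 lin_opZ //.
exact/bounded_op_lin/nest_alg_bounded.
Qed.

Lemma M0_gen_compR Psi A S : nest_alg E A -> M0_gen Psi S -> M0_gen Psi (S \o A).
Proof.
move=> nA [L [N [f [x [EL [EN [LN [[[lf cf] fN] [Lx ->]]]]]]]]].
have [lA cA] := nest_alg_bounded nA.
exists L, N, (f \o A), x; do 3 (split => //); split; last by split.
split; last by move=> z Nz /=; apply: fN; apply: (nest_alg_invariant nA (nminus_in _)).
split; first by move=> a u v /=; rewrite lA lf.
by move=> z; apply: continuous_comp; [apply: cA|apply: cf].
Qed.

Lemma M0_bimodule Psi : bimodule E (M0 E Psi).
Proof.
rewrite M0E; split.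
- by move=> T [].
- by apply: op_closure_zero; apply: op_span_zero.
- by move=> S T; apply: op_closure_add => S' T'; apply: op_span_add.
- by move=> a T; apply: op_closure_scale => T'; apply: op_span_scale.
- move=> A T nA MT; have bA := nest_alg_bounded nA; split.
  + apply: op_closure_compL MT => // T'; apply: op_span_compL.
      exact: bounded_op_lin.
    by move=> S; apply: M0_gen_compL.
  + apply: op_closure_compR MT => // T'; apply: op_span_compR.
    by move=> S; apply: M0_gen_compR.
Qed.

Lemma rank1_nest_alg N f u : E N -> annihilator (nminus E N) f -> N u ->
  nest_alg E (rank1 f u).
Proof.
move=> EN [[lf cf] fN] Nu; split.
  split; first by move=> a x y; rewrite /rank1 lf scalerDl scalerA.
  by move=> z; apply: continuousZ; [apply: cf|apply: cvg_cst].
move=> M EM _ [z Mz <-]; rewrite /rank1.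
have [NM|MN] := nest_total EN EM; first exact: linsubZ (nest_linsub EM) (NM _ Nu).
have [->|MN'] := pselect (M = N); first exact: linsubZ (nest_linsub EN) Nu.
rewrite fN ?scale0r; first by apply: linsub0; apply: nest_linsub.
exact: lt_nminus EM MN MN' _ Mz.
Qed.

(* ... contained in every norm-closed bimodule [J] with essential support
   function [Psi]: a generator [f (x) x] factors as [(g (x) x) T' (f (x) u)]
   with [T'] in [J], [T' u] outside [L_-] and [g] separating [T' u] from [L_-]. *)
Lemma M0_sub_bimodule Psi J : separates_subspaces X -> bimodule E J -> norm_closed J ->
  (forall N, E N -> Phi_e E J N = Psi N) -> M0 E Psi `<=` J.
Proof.
move=> sepX bJ ncJ PhiE; rewrite M0E => T MT; apply: ncJ.
apply: op_closure_mono MT; apply: (op_span_sub_bimodule bJ).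
move=> _ [L [N [f [x [EL [EN [[LPsi LPsi'] [fN [Lx ->]]]]]]]]].
have [T' [u [JT' [Nu T'u]]]] : exists T' u, J T' /\ N u /\ ~ nminus E L (T' u).
  apply: contrapT => noT'; apply: LPsi'; apply/seteqP; split => //.
  rewrite -PhiE //; apply: nmeet_lb; split; first exact: nminus_in.
  move=> T2 JT2; apply: findim_quot_of_sub => _ [n Nn <-].
  by apply: contrapT => nT2n; apply: noT'; exists T2, n.
have [g [dg [gL gT'u]]] :=
  sepX _ _ (nest_linsub (nminus_in L)) (nest_closed (nminus_in L)) T'u.
have [Jb _ _ _ Jmul] := bJ.
have lT' := bounded_op_lin (Jb _ JT').
have -> : rank1 f x = (rank1 g x \o T') \o rank1 f u.
  by apply: funext => y /=; rewrite /rank1 lin_opZ // dual_vecZ // gT'u mulr1.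
have JgT' := (Jmul _ _ (rank1_nest_alg EL (conj dg gL) Lx) JT').1.
exact: (Jmul _ _ (rank1_nest_alg EN fN Nu) JgT').2.
Qed.

End Nest.

Section HahnBanach.
Context {R : realType} {X : normedModType R[i]}.
Local Open Scope complex_scope.
Local Notation Re := (@complex.Re R).
Local Notation Im := (@complex.Im R).

Definition nrm (x : X) : R := Re `|x|.

Lemma normC_real (t : R[i]) : `|t| = (Re `|t|)%:C.
Proof. by rewrite RRe_real // normr_real. Qed.

Lemma nrmE x : `|x| = (nrm x)%:C.
Proof. by rewrite /nrm RRe_real // normr_real. Qed.

Lemma nrm_ge0 x : 0 <= nrm x.
Proof. by have := normr_ge0 x; rewrite lecE => /andP [_ h]. Qed.

Lemma nrmD x y : nrm (x + y) <= nrm x + nrm y.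
Proof. by rewrite -lecR rmorphD /= -!nrmE ler_normD. Qed.

Lemma nrmN x : nrm (- x) = nrm x.
Proof. by rewrite /nrm normrN. Qed.

Lemma nrmZ (t : R[i]) x : nrm (t *: x) = Re `|t| * nrm x.
Proof. by apply: complexI; rewrite rmorphM /= -nrmE -normC_real -nrmE normrZ. Qed.

Lemma Re_norm_real (r : R) : Re `|r%:C| = `|r|.
Proof. by rewrite normc_def /= expr0n /= addr0 sqrtr_sqr. Qed.

Lemma nrmZR (r : R) x : nrm (r%:C *: x) = `|r| * nrm x.
Proof. by rewrite nrmZ Re_norm_real. Qed.

Lemma Re_le_norm (t : R[i]) : Re t <= Re `|t|.
Proof.
apply: le_trans (ler_norm (Re t)) _.
by have := normc_ge_Re t; rewrite lecE => /andP [_ h].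
Qed.

Lemma ReD (s t : R[i]) : Re (s + t) = Re s + Re t.
Proof. by case: s t => [a b] [c d]. Qed.

Lemma ReMR (r : R) (t : R[i]) : Re (r%:C * t) = r * Re t.
Proof. by case: t => [a b] /=; rewrite mul0r subr0. Qed.

Lemma closed_dist_pos (L : set X) y : closed L -> ~ L y ->
  exists2 dr : R, 0 < dr & forall l, L l -> dr <= nrm (y - l).
Proof.
move=> cL nLy; have : ~ closure L y by move=> /cL.
move=> /existsNP [B /not_implyP [nB /set0P/negP]]; rewrite negbK => /eqP LB.
move: nB => /nbhs_normP [e /= e0 He].
exists (Re e); first by move: e0; rewrite ltcE => /andP [].
move=> l Ll; rewrite -lecR -nrmE.
have eR : e \is Num.real by apply: gtr0_real.
have : ~ (`|y - l| < e) by move=> /He Bl; have : (L `&` B) l by []; rewrite LB.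
by rewrite RRe_real // real_leNgt ?normr_real //; move/negP.
Qed.

(* Graphs of real-linear functionals on subspaces of [X], dominated by [nrm]. *)
Definition dominated_graph (H : set (X * R)) : Prop :=
  [/\ (forall x a b, H (x, a) -> H (x, b) -> a = b),
      (forall x a x' b, H (x, a) -> H (x', b) -> H (x + x', a + b)),
      (forall (r : R) x a, H (x, a) -> H (r%:C *: x, r * a)) &
      (forall x a, H (x, a) -> a <= nrm x)].

Definition graph_ext (H : set (X * R)) z c : set (X * R) :=
  [set q | exists x a (r : R), H (x, a) /\ q = (x + r%:C *: z, a + r * c)].

Lemma graph_ext_sub H z c : H `<=` graph_ext H z c.
Proof.
move=> [x a] h; exists x, a, 0; split => //.
by rewrite mul0r addr0 rmorph0 scale0r addr0.
Qed.

(* The one-dimensional Hahn-Banach step: a value [c] at [z] compatible with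
   domination exists, namely the supremum of the [a - nrm (x - z)]. *)
Lemma extension_value H z : dominated_graph H -> H (0, 0) ->
  exists c, (forall x a, H (x, a) -> a - nrm (x - z) <= c) /\
            (forall x a, H (x, a) -> c <= nrm (x + z) - a).
Proof.
move=> [_ Hadd _ Hdom] H00.
pose S := [set v | exists x a, H (x, a) /\ v = a - nrm (x - z)].
have key x a x' a' : H (x, a) -> H (x', a') -> a - nrm (x - z) <= nrm (x' + z) - a'.
  move=> h h'; have := Hdom _ _ (Hadd _ _ _ _ h h').
  have : nrm (x + x') <= nrm (x - z) + nrm (x' + z).
    have -> : x + x' = (x - z) + (x' + z) by rewrite addrACA addNr addr0.
    exact: nrmD.
  move=> h1 h2; have := le_trans h2 h1; lra.
have S0 : S !=set0 by exists (0 - nrm (0 - z)), 0, 0.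
have ubS : ubound S (nrm (0 + z) - 0) by move=> _ [x [a [h ->]]]; apply: key.
exists (sup S); split => x a h.
  by apply: ub_le_sup; [exists (nrm (0 + z) - 0)|exists x, a].
by apply: ge_sup S0 _ => _ [x0 [a0 [h0 ->]]]; apply: key h0 h.
Qed.

(* With such a [c], the extended graph is still dominated: for [r > 0] use the
   upper bound at [(x / r, a / r)], for [r < 0] the lower one. *)
Lemma graph_ext_dominated H z c : dominated_graph H ->
  (forall x a, H (x, a) -> a - nrm (x - z) <= c) ->
  (forall x a, H (x, a) -> c <= nrm (x + z) - a) ->
  forall x a, graph_ext H z c (x, a) -> a <= nrm x.
Proof.
move=> [_ _ Hs Hb] lo up w b [x [a [r [h1 [-> ->]]]]].
have [r0|r0|->] := ltgtP r 0; last first.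
- by rewrite mul0r addr0 rmorph0 scale0r addr0; apply: Hb.
- have h' := ler_wpM2l (ltW r0) (up _ _ (Hs r^-1 _ _ h1)).
  rewrite mulrBr mulrA mulfV ?gt_eqF // mul1r in h'.
  have -> : x + r%:C *: z = r%:C *: (r^-1%:C *: x + z).
    by rewrite scalerDr scalerA -rmorphM mulfV ?gt_eqF // rmorph1 scale1r.
  rewrite nrmZR gtr0_norm //; lra.
- pose s := - r; have s0 : 0 < s by rewrite /s oppr_gt0.
  have rs : r = - s by rewrite /s opprK.
  have h' := ler_wpM2l (ltW s0) (lo _ _ (Hs s^-1 _ _ h1)).
  rewrite mulrBr mulrA mulfV ?gt_eqF // mul1r in h'.
  have -> : x + r%:C *: z = s%:C *: (s^-1%:C *: x - z).
    by rewrite scalerBr scalerA -rmorphM mulfV ?gt_eqF // rmorph1 scale1r rs rmorphN scaleNr.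
  rewrite nrmZR gtr0_norm // rs; lra.
Qed.

Lemma graph_ext_linear H z c : dominated_graph H -> (forall a, ~ H (z, a)) ->
  (forall x a, H (x, a) -> a - nrm (x - z) <= c) ->
  (forall x a, H (x, a) -> c <= nrm (x + z) - a) ->
  dominated_graph (graph_ext H z c).
Proof.
move=> domH nz lo up; have [Hf Ha Hs _] := domH; split.
- move=> w b1 b2 [x [a [r [h1 [-> ->]]]]] [x' [a' [r' [h2 [e ->]]]]].
  have rr : r = r'.
    apply: contrapT => rr; apply: (nz ((r - r')^-1 * (a' - a))).
    have -> : z = ((r - r')^-1)%:C *: (x' - x).
      have e' : (r - r')%:C *: z = x' - x.
        rewrite rmorphB /= scalerBl; apply/eqP; rewrite subr_eq.
        by rewrite -(addKr x (r%:C *: z)) e addrA (addrC (- x)).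
      rewrite -e' scalerA -rmorphM /= mulVf ?subr_eq0; last by apply/eqP.
      by rewrite scale1r.
    apply: (Hs); apply: (Ha) => //; have := Hs (-1) _ _ h1.
    by rewrite rmorphN1 scaleN1r mulN1r.
  move: e; rewrite -rr => /addIr ex; rewrite ex in h1.
  by rewrite (Hf _ _ _ h1 h2).
- move=> w b w' b' [x [a [r [h1 [-> ->]]]]] [x' [a' [r' [h2 [-> ->]]]]].
  exists (x + x'), (a + a'), (r + r'); split; first exact: Ha.
  by rewrite rmorphD scalerDl mulrDl; congr (_, _); rewrite addrACA.
- move=> s w b [x [a [r [h1 [-> ->]]]]].
  exists (s%:C *: x), (s * a), (s * r); split; first exact: Hs.
  by rewrite scalerDr scalerA -rmorphM mulrDr mulrA.
- exact: graph_ext_dominated.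
Qed.

Definition rlinear (phi : X -> R) : Prop :=
  forall (r : R) x x', phi (r%:C *: x + x') = r * phi x + phi x'.

Lemma rlinear0 phi : rlinear phi -> phi 0 = 0.
Proof.
move=> lphi; have := lphi 1 0 0; rewrite scale1r addr0 mul1r => h.
by apply: (addrI (phi 0)); rewrite addr0 -h.
Qed.

Lemma rlinearD phi x x' : rlinear phi -> phi (x + x') = phi x + phi x'.
Proof. by move=> lphi; have := lphi 1 x x'; rewrite scale1r mul1r. Qed.

Lemma rlinearZ phi (r : R) x : rlinear phi -> phi (r%:C *: x) = r * phi x.
Proof. by move=> lphi; have := lphi r x 0; rewrite !addr0 rlinear0 // addr0. Qed.

Lemma rlinearN phi x : rlinear phi -> phi (- x) = - phi x.
Proof. by move=> lphi; rewrite -scaleN1r -(rmorphN1 (real_complex R)) rlinearZ // mulN1r. Qed.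

Section RealExtension.
Variables (L : set X) (y : X) (dr : R).
Hypotheses (sL : linsub L) (nLy : ~ L y) (dr0 : 0 < dr)
  (hdr : forall l, L l -> dr <= nrm (y - l)).

Definition base_graph : set (X * R) :=
  [set q | exists l t, L l /\ q = (l + t *: y, Re t * dr)].

Lemma base_coord_uniq l t l' t' : L l -> L l' -> l + t *: y = l' + t' *: y -> t = t'.
Proof.
move=> Ll Ll' e; apply/eqP; apply: contrapT => /negP tt; apply: nLy.
have -> : y = (t - t')^-1 *: (l' - l).
  apply: (@scalerI _ _ (t - t')); first by rewrite subr_eq0.
  rewrite scalerA mulfV ?subr_eq0 // scale1r scalerBl.
  by rewrite -(addKr l (t *: y)) e addrA addrK addrC.
by apply: linsubZ => //; apply: linsubB.
Qed.

(* Domination holds because [y] is at distance at least [dr] from [L]. *)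
Lemma base_graph_dominated : dominated_graph base_graph.
Proof.
split.
- move=> x a b [l [t [Ll [-> ->]]]] [l' [t' [Ll' [e ->]]]].
  by rewrite (base_coord_uniq Ll Ll' e).
- move=> x a x' b [l [t [Ll [-> ->]]]] [l' [t' [Ll' [-> ->]]]].
  exists (l + l'), (t + t'); split; first exact: linsubD.
  by rewrite scalerDl addrACA ReD mulrDl.
- move=> r x a [l [t [Ll [-> ->]]]].
  exists (r%:C *: l), (r%:C * t); split; first exact: linsubZ.
  by rewrite scalerDr scalerA ReMR mulrA.
- move=> x a [l [t [Ll [-> ->]]]].
  have [->|t0] := eqVneq t 0; first by rewrite mul0r nrm_ge0.
  have -> : l + t *: y = t *: (y - (- t^-1 *: l)).
    by rewrite scaleNr opprK scalerDr scalerA mulfV // scale1r addrC.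
  rewrite nrmZ; apply: le_trans (_ : Re `|t| * dr <= _).
    by apply: ler_wpM2r; [apply: ltW|apply: Re_le_norm].
  rewrite ler_wpM2l //; first by have := normr_ge0 t; rewrite lecE => /andP [].
  by apply: hdr; apply: linsubZ.
Qed.

Definition admissible (H : set (X * R)) : Prop := dominated_graph (H `|` base_graph).

Lemma chain_common (F : set (set (X * R))) q1 q2 : F `<=` admissible ->
  total_on F subset ->
  ((\bigcup_(H in F) H) `|` base_graph) q1 -> ((\bigcup_(H in F) H) `|` base_graph) q2 ->
  exists H, [/\ dominated_graph H, H `<=` (\bigcup_(H in F) H) `|` base_graph, H q1 & H q2].
Proof.
move=> FP tF h1 h2.
have sub G : F G -> G `|` base_graph `<=` (\bigcup_(H in F) H) `|` base_graph.
  by move=> FG q [Gq|Bq]; [left; exists G|right].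
case: h1 => [[G1 FG1 G1q]|Bq1]; case: h2 => [[G2 FG2 G2q]|Bq2].
- have [G12|G21] := tF _ _ FG1 FG2.
    by exists (G2 `|` base_graph); split; [exact: FP|exact: sub|left; exact: G12|left].
  by exists (G1 `|` base_graph); split; [exact: FP|exact: sub|left|left; exact: G21].
- by exists (G1 `|` base_graph); split; [exact: FP|exact: sub|left|right].
- by exists (G2 `|` base_graph); split; [exact: FP|exact: sub|right|left].
- by exists base_graph; split; [exact: base_graph_dominated|move=> q; right| |].
Qed.

Lemma admissible_chain (F : set (set (X * R))) : F `<=` admissible ->
  total_on F subset -> admissible (\bigcup_(H in F) H).
Proof.
move=> FP tF; split.
- move=> x a b h1 h2; have [H [[f _ _ _] _ H1 H2]] := chain_common FP tF h1 h2.
  exact: f H1 H2.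
- move=> x a x' b h1 h2; have [H [[_ f _ _] s H1 H2]] := chain_common FP tF h1 h2.
  exact: s (f _ _ _ _ H1 H2).
- move=> r x a h1; have [H [[_ _ f _] s H1 _]] := chain_common FP tF h1 h1.
  exact: s (f _ _ _ H1).
- move=> x a h1; have [H [[_ _ _ f] _ H1 _]] := chain_common FP tF h1 h1.
  exact: f.
Qed.

(* Real Hahn-Banach: a maximal admissible graph is defined everywhere. *)
Lemma real_extension : exists phi : X -> R,
  [/\ rlinear phi, (forall x, phi x <= nrm x) &
      (forall l t, L l -> phi (l + t *: y) = Re t * dr)].
Proof.
have [A [PA Amax]] := Zorn_bigcup admissible_chain.
pose H := A `|` base_graph.
have [Hf Ha Hs Hb] : dominated_graph H := PA.
have H00 : H (0, 0).
  by right; exists 0, 0; split; [apply: linsub0|rewrite scale0r addr0 mul0r].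
have dom z : exists a, H (z, a).
  apply: contrapT => /forallNP nz.
  have [c [lo up]] := extension_value z PA H00.
  have HH' := @graph_ext_sub H z c.
  apply: (Amax (graph_ext H z c)).
    split; first by move=> q Aq; apply: HH'; left.
    move=> /(_ (z, c)) Azc; apply: (nz c); left; apply: Azc.
    by exists 0, 0, 1; rewrite rmorph1 scale1r add0r mul1r add0r.
  rewrite /admissible; have -> : graph_ext H z c `|` base_graph = graph_ext H z c.
    by apply/seteqP; split => q; [case=> // Bq; apply: HH'; right|left].
  exact: graph_ext_linear.
pose phi x := projT1 (cid (dom x)).
have phiP x : H (x, phi x) by rewrite /phi; case: cid.
exists phi; split.
- by move=> r x x'; apply: Hf (phiP _) _; apply: Ha; [apply: Hs; apply: phiP|apply: phiP].
- by move=> x; apply: Hb; apply: phiP.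
- by move=> l t Ll; apply: Hf (phiP _) _; right; exists l, t.
Qed.

End RealExtension.

(* The imaginary unit, and complexification: a real-linear functional [phi]
   is the real part of the complex-linear functional [x |-> phi x - i phi (i x)]. *)
Definition ii : R[i] := Complex 0 1.

Lemma iiE (x : X) : ii *: (ii *: x) = - x.
Proof.
rewrite scalerA (_ : ii * ii = -1) ?scaleN1r //.
by apply/eqP; rewrite eq_complex /= !(mul0r, mulr0, mul1r, mulr1, sub0r, addr0, oppr0) !eqxx.
Qed.

Definition complexify (phi : X -> R) (x : X) : R[i] := Complex (phi x) (- phi (ii *: x)).

Lemma complexify_linear phi : rlinear phi -> forall (a : R[i]) x x',
  complexify phi (a *: x + x') = a * complexify phi x + complexify phi x'.
Proof.
move=> lphi a x x'; rewrite /complexify.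
have aE (v : X) : a *: v = (Re a)%:C *: v + (Im a)%:C *: (ii *: v).
  by rewrite scalerA -scalerDl mulrC -complexE.
have e1 : phi (a *: x + x') = Re a * phi x + Im a * phi (ii *: x) + phi x'.
  by rewrite rlinearD // aE rlinearD // !rlinearZ.
have e2 : phi (ii *: (a *: x + x')) = Re a * phi (ii *: x) - Im a * phi x + phi (ii *: x').
  rewrite scalerDr rlinearD // (aE x) scalerDr rlinearD // !scalerA !(mulrC ii).
  by rewrite -!scalerA iiE !rlinearZ // rlinearN // mulrN.
rewrite e1 e2; case: a {aE e1 e2} => al be /=.
by apply/eqP; rewrite eq_complex /=; apply/andP; split; apply/eqP; ring.
Qed.

Lemma complexify_bound phi (k : R) : rlinear phi ->
  (forall x, `|phi x| <= k * nrm x) -> forall x, `|complexify phi x| <= (2 * k)%:C * `|x|.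
Proof.
move=> lphi hk x.
have -> : complexify phi x = (phi x)%:C + ii * (- phi (ii *: x))%:C.
  apply/eqP; rewrite eq_complex /=.
  by rewrite !(mul0r, mulr0, mul1r, mulr1, subr0, sub0r, addr0, add0r) !eqxx.
have nRC (r : R) : `|r%:C| = `|r|%:C by rewrite normC_real Re_norm_real.
have nii : `|ii| = 1 by rewrite normc_def /= expr0n /= expr1n add0r sqrtr1.
apply: le_trans (ler_normD _ _) _.
rewrite normrM nii mul1r !nRC -rmorphD nrmE -rmorphM lecR normrN.
have := hk (ii *: x); rewrite nrmZ nii (_ : Re 1 = 1) // mul1r.
have := hk x; lra.
Qed.

Lemma continuous_of_bound (f : X -> (R[i] : numFieldType)) (k : R[i]) : 0 <= k ->
  (forall x x', f x - f x' = f (x - x')) -> (forall x, `|f x| <= k * `|x|) ->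
  continuous f.
Proof.
move=> k0 fB fb x; apply/cvgrPdist_lt => e e0.
have k1 : 0 < k + 1 by rewrite ltr_wpDl.
apply/nbhs_normP; exists (e / (k + 1)) => /=; first by rewrite divr_gt0.
move=> t /= xt; rewrite fB; apply: le_lt_trans (fb _) _.
apply: le_lt_trans (_ : (k + 1) * `|x - t| < e).
  by apply: ler_wpM2r => //; rewrite lerDl.
by rewrite mulrC -ltr_pdivlMr.
Qed.

Lemma separates_subspaces_complex : separates_subspaces X.
Proof.
move=> L y sL cL nLy.
have [dr dr0 hdr] := closed_dist_pos cL nLy.
have [phi [lphi bphi phiLy]] := real_extension sL nLy dr0 hdr.
pose psi x := phi x / dr.
have lpsi : rlinear psi by move=> r x x'; rewrite /psi lphi mulrDl mulrA.
have psib x : `|psi x| <= dr^-1 * nrm x.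
  rewrite normrM (@gtr0_norm _ dr^-1) ?invr_gt0 // mulrC ler_pM2l ?invr_gt0 //.
  by rewrite ler_norml bphi andbT lerNl -rlinearN // -(nrmN x) bphi.
have psiL l t : L l -> psi (l + t *: y) = Re t by move=> Ll; rewrite /psi phiLy // mulfK ?gt_eqF.
exists (complexify psi); split; [split|split].
- exact: complexify_linear.
- apply: (@continuous_of_bound _ (2 * dr^-1)%:C).
  + by rewrite ler0c mulr_ge0 // invr_ge0 ltW.
  + move=> x x'; have -> : x - x' = (-1) *: x' + x by rewrite scaleN1r addrC.
    by rewrite complexify_linear // mulN1r addrC.
  + exact: complexify_bound.
- move=> l Ll; rewrite /complexify.
  have := psiL l 0 Ll; have := psiL (ii *: l) 0 (linsubZ ii sL Ll).
  rewrite !scale0r !addr0 => -> ->.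
  by apply/eqP; rewrite eq_complex /= oppr0 !eqxx.
- rewrite /complexify.
  have := psiL 0 1 (linsub0 sL); have := psiL 0 ii (linsub0 sL).
  rewrite !add0r scale1r => -> ->.
  by apply/eqP; rewrite eq_complex /= oppr0 !eqxx.
Qed.

End HahnBanach.

Theorem mainTheorem15 (R : realType) (X : completeNormedModType R[i])
  (E : set (set X)) (Psi : set X -> set X) :
  is_nest E -> ess_support_function E Psi ->
  (bimodule E (Me E Psi) /\
     forall J : set (X -> X), bimodule E J ->
       (forall N, E N -> Phi_e E J N = Psi N) -> J `<=` Me E Psi) /\
  (bimodule E (M0 E Psi) /\
     forall J : set (X -> X), bimodule E J -> norm_closed J ->
       (forall N, E N -> Phi_e E J N = Psi N) -> M0 E Psi `<=` J).
Proof.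
move=> nestE _; split; split.
- exact: Me_bimodule.
- by move=> J; apply: bimodule_sub_Me.
- exact: M0_bimodule.
- by move=> J; apply: M0_sub_bimodule => //; apply: separates_subspaces_complex.
Qed.
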